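(* Let $H$ be a cubic graph of order $m$ and let $G=T(H)$. Then $c_2(G)-\left\lceil\frac{|V(G)|+2}{4}\right\rceil\ge\left\lfloor\frac{m-2}{4}\right\rfloor$. Moreover, $G$ has the same number of bridges and the same chromatic index as $H$.
   Context: For a cubic graph $H$, the triangle-replaced graph $T(H)$ is obtained by replacing each vertex $v$ of $H$ by a triangle $T(v)$ and, for each edge $uv$ of $H$, adding an edge joining a vertex of $T(u)$ to a vertex of $T(v)$, so that each triangle vertex is incident with exactly one added edge. For a graph $G=(V,E)$ and $S_0\subseteq V$, the irreversible $2$-threshold conversion process sets, for $t=1,2,\dots$, $S_t=S_{t-1}\cup\{v: v \text{ has at least } 2 \text{ neighbours in } S_{t-1}\}$; $S_0$ is a $2$-conversion set if $S_t=V$ for some $t$, and $c_2(G)$ is the minimum size of a $2$-conversion set. *)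

From HB Require Import structures.
From mathcomp Require Import all_boot all_order all_algebra.
From mathcomp Require Import boolp.
Set Implicit Arguments. Unset Strict Implicit. Unset Printing Implicit Defensive.

Definition simple_graph (T : finType) (r : rel T) : Prop :=
  symmetric r /\ irreflexive r.

Definition cubic (V : finType) (e : rel V) : Prop :=
  simple_graph e /\ forall v : V, #|[set u | e v u]| = 3.

(* Triangle-replaced graph T(H): the vertices of the triangle T(v) are the
   darts (v,u) with u adjacent to v; (v,u) ~ (v,u') for u <> u' (triangle
   edges), and (v,u) ~ (u,v) (the edge added for the edge uv of H). *)
Definition tri_vert (V : finType) (e : rel V) := {x : V * V | e x.1 x.2}.

Definition tri_rel (V : finType) (e : rel V) : rel (tri_vert e) :=
  fun x y =>
    let a := (val x).1 in let b := (val x).2 in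
    let c := (val y).1 in let d := (val y).2 in
    ((a == c) && (b != d)) || ((a == d) && (b == c)).
Arguments tri_rel {V} e.

Definition conv_step (T : finType) (r : rel T) (S : {set T}) : {set T} :=
  S :|: [set v | 2 <= #|[set u in S | r v u]|].

Definition conversion_set (T : finType) (r : rel T) (S0 : {set T}) : Prop :=
  exists t : nat, iter t (conv_step r) S0 = [set: T].

Lemma c2_exists (T : finType) (r : rel T) :
  exists k, `[< exists S : {set T}, #|S| = k /\ conversion_set r S >].
Proof.
exists #|[set: T]|; apply/asboolP; exists [set: T]; split => //; by exists 0.
Qed.

Definition c2 (T : finType) (r : rel T) : nat := ex_minn (c2_exists r).

Definition edge_set (T : finType) (r : rel T) : {set {set T}} :=
  [set E : {set T} | [exists x, exists y, (E == [set x; y]) && r x y]].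

Definition is_bridge (T : finType) (r : rel T) (E : {set T}) : bool :=
  [exists x, exists y, [&& E == [set x; y], r x y &
     ~~ connect (fun a b => r a b && ([set a; b] != E)) x y]].

Definition num_bridges (T : finType) (r : rel T) : nat :=
  #|[set E in edge_set r | is_bridge r E]|.

Definition proper_edge_colouring (T : finType) (r : rel T) (k : nat)
    (c : {set T} -> 'I_k) : Prop :=
  forall E F, E \in edge_set r -> F \in edge_set r -> E != F ->
    E :&: F != set0 -> c E != c F.

Lemma chi'_exists (T : finType) (r : rel T) :
  exists k, `[< exists c : {set T} -> 'I_k, proper_edge_colouring r c >].
Proof.
exists #|{set T}|; apply/asboolP; exists (@enum_rank _).
move=> E F _ _ nEF _; apply: contra nEF => /eqP h.
by apply/eqP; apply: enum_rank_inj.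
Qed.

Definition chromatic_index (T : finType) (r : rel T) : nat :=
  ex_minn (chi'_exists r).

From mathcomp Require Import all_boot all_order all_algebra.
From mathcomp Require Import perm zify boolp.
Set Implicit Arguments. Unset Strict Implicit. Unset Printing Implicit Defensive.

(* Each dart of the triangle T(v) has a single neighbour outside T(v), so a
   triangle containing no seed never becomes active.  Hence c_2(T(H)) >= |V(H)|
   = |V(T(H))| / 3, and the stated inequality is arithmetic.
   The edges of T(H) are the triangle edges and the pendant edges, the latter in
   bijection with the edges of H.  A triangle minus an edge stays connected, so
   triangle edges are never bridges, and walks in T(H) avoiding a pendant edge
   project to walks in H avoiding the corresponding edge and conversely.
   A proper edge colouring of H colours T(H) properly by giving each triangle
   edge of T(v) the colour of the edge of H at the opposite dart.  Conversely,
   in a colouring of T(H) with at most three colours every pendant edge carries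
   the colour of the opposite triangle edge, so the pendant edges colour H
   properly.  If T(H) needs four colours, then four colours also suffice for H
   by Vizing's bound for subcubic graphs: an uncoloured edge xy can always be
   coloured after recolouring one edge at x or swapping one Kempe chain. *)

Lemma eq_set2 (T : finType) (a b c d : T) :
  [set a; b] = [set c; d] -> (a = c /\ b = d) \/ (a = d /\ b = c).
Proof.
move=> h.
have ha : a \in [set c; d] by rewrite -h !inE eqxx.
have hb : b \in [set c; d] by rewrite -h !inE eqxx orbT.
have hc : c \in [set a; b] by rewrite h !inE eqxx.
have hd : d \in [set a; b] by rewrite h !inE eqxx orbT.
move: ha hb hc hd; rewrite !inE.
by do 4 (case/orP => /eqP ?); subst; auto.
Qed.

Lemma exists_in_set2 (T : finType) (P : pred T) s t :
  [exists x in [set s; t], P x] = P s || P t.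
Proof.
apply/exists_inP/orP => [[x]|[h|h]].
- by rewrite !inE => /orP [] /eqP -> h; auto.
- by exists s; rewrite ?inE ?eqxx.
- by exists t; rewrite ?inE ?eqxx ?orbT.
Qed.

Lemma forall_in_set2 (T : finType) (P : pred T) s t :
  [forall x in [set s; t], P x] = P s && P t.
Proof.
apply/forall_inP/andP => [h|[h1 h2] x].
- by split; apply: h; rewrite !inE eqxx ?orbT.
- by rewrite !inE => /orP [] /eqP ->.
Qed.

Lemma homo_connect (T U : finType) (R : rel T) (S : rel U) (h : T -> U) :
  (forall a b, R a b -> connect S (h a) (h b)) ->
  forall x y, connect R x y -> connect S (h x) (h y).
Proof.
move=> hR x y /connectP [s pth ->]; elim: s x pth => [|z s IH] x /=.
  by rewrite connect0.
by case/andP => xz pth; apply: connect_trans (hR _ _ xz) (IH _ pth).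
Qed.

(* [proper_edge_colouring r c] unfolds to [proper_on c (edge_set r)]. *)
Definition proper_on (T : finType) k (c : {set T} -> 'I_k) (D : {set {set T}}) :=
  forall E F, E \in D -> F \in D -> E != F -> E :&: F != set0 -> c E != c F.

Section SimpleGraph.
Variables (T : finType) (r : rel T).

Definition del_edge (E : {set T}) : rel T := fun a b => r a b && ([set a; b] != E).

Lemma edge_set_at E s :
  symmetric r -> E \in edge_set r -> s \in E -> exists2 t, E = [set s; t] & r s t.
Proof.
move=> r_sym; rewrite inE => /existsP [a /existsP [b /andP [/eqP -> hab]]].
rewrite !inE => /orP [] /eqP ->; first by exists b.
by exists a; rewrite 1?setUC 1?r_sym.
Qed.

Lemma bridge_edge E : is_bridge r E -> E \in edge_set r.
Proof.
case/existsP => x /existsP [y /and3P [h1 h2 _]].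
by rewrite inE; apply/existsP; exists x; apply/existsP; exists y; rewrite h1 h2.
Qed.

Hypothesis r_simple : simple_graph r.

Lemma mem_edge_set2 a b : ([set a; b] \in edge_set r) = r a b.
Proof.
apply/idP/idP => [|hab]; last first.
  by rewrite inE; apply/existsP; exists a; apply/existsP; exists b; rewrite eqxx.
rewrite inE => /existsP [x /existsP [y /andP [/eqP /eq_set2 h hxy]]].
by case: h => -[-> ->]; rewrite // (proj1 r_simple).
Qed.

Lemma proper_on_adjacent k (c : {set T} -> 'I_k) D p q q' :
  proper_on c D -> [set p; q] \in D -> [set p; q'] \in D -> r p q -> q != q' ->
  c [set p; q] != c [set p; q'].
Proof.
move=> hc hq hq' rpq qq'; apply: hc => //; last by apply/set0Pn; exists p; rewrite !inE eqxx.
apply: contraNneq qq' => /setP /(_ q); rewrite !inE eqxx orbT => /esym /orP [/eqP pq|//].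
by move: rpq; rewrite pq (proj2 r_simple).
Qed.

Lemma proper_colour_adjacent k (c : {set T} -> 'I_k) p q q' :
  proper_edge_colouring r c -> r p q -> r p q' -> q != q' ->
  c [set p; q] != c [set p; q'].
Proof.
move=> hc hq hq'; apply: (proper_on_adjacent (D := edge_set r) hc).
all: by rewrite ?mem_edge_set2.
Qed.

Lemma proper_colour3_opposite k (c : {set T} -> 'I_k) x y x' x'' :
  k <= 3 -> proper_edge_colouring r c ->
  r x y -> r x x' -> r x x'' -> r x' x'' -> y != x' -> y != x'' -> x' != x'' ->
  c [set x; y] = c [set x'; x''].
Proof.
move=> hk hc hy hx' hx'' hx'x'' yx' yx'' x'x''.
have [r_sym r_irr] := r_simple.
have xx' : x != x' by apply: contraTneq hx' => <-; rewrite r_irr.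
have xx'' : x != x'' by apply: contraTneq hx'' => <-; rewrite r_irr.
have h1 := proper_colour_adjacent hc hx' hx'' x'x''.
have h2 := proper_colour_adjacent hc (etrans (r_sym _ _) hx') hx'x'' xx''.
have h3 := proper_colour_adjacent hc (etrans (r_sym _ _) hx'') (etrans (r_sym _ _) hx'x'') xx'.
have h4 := proper_colour_adjacent hc hy hx' yx'.
have h5 := proper_colour_adjacent hc hy hx'' yx''.
rewrite [[set x'; x]]setUC in h2; rewrite ![[set x''; _]]setUC in h3.
apply/eqP; apply: contraT => h6; move: h1 h2 h3 h4 h5 h6.
move: (c [set x; y]) (c [set x; x']) (c [set x; x'']) (c [set x'; x'']).
by case=> a ? [b ?] [d ?] [f ?]; rewrite -!val_eqE /=; lia.
Qed.

End SimpleGraph.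

Section PartialEdgeColouring.
Variables (T : finType) (k : nat).
Implicit Types (c : {set T} -> 'I_k) (D : {set {set T}}) (E F : {set T}) (g : 'I_k) (w : T).

Definition colours_at c D w : {set 'I_k} := [set c F | F in D & w \in F].

Definition recolour c F0 g : {set T} -> 'I_k := fun F => if F == F0 then g else c F.

Lemma colours_atP c D w g :
  reflect (exists F, [/\ F \in D, w \in F & c F = g]) (g \in colours_at c D w).
Proof.
apply: (iffP imsetP) => [[F]|[F [FD wF <-]]]; last by exists F; rewrite ?inE ?FD.
by rewrite inE => /andP [FD wF] ->; exists F.
Qed.

Lemma mem_colours_at c D F w : F \in D -> w \in F -> c F \in colours_at c D w.
Proof. by move=> FD wF; apply/colours_atP; exists F. Qed.

Lemma colours_atS c D D' w : D' \subset D -> colours_at c D' w \subset colours_at c D w.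
Proof.
move=> /subsetP DD'; apply/subsetP => g /colours_atP [F [FD wF <-]].
by apply/colours_atP; exists F; rewrite DD'.
Qed.

Lemma proper_onS c D D' : proper_on c D -> D' \subset D -> proper_on c D'.
Proof. by move=> hc /subsetP DD' E F /DD' ED /DD' FD; apply: hc. Qed.

Lemma proper_on_setU1 c D F0 a b g : proper_on c D -> F0 = [set a; b] ->
  g \notin colours_at c D a -> g \notin colours_at c D b ->
  proper_on (recolour c F0 g) (F0 |: D).
Proof.
move=> hc hF ga gb.
have new F : F \in D -> F :&: F0 != set0 -> c F != g.
  move=> FD /set0Pn [z]; rewrite inE hF !inE => /andP [zF /orP [] /eqP za].
  - by apply: contraNneq ga => <-; apply/colours_atP; exists F; rewrite -za.
  - by apply: contraNneq gb => <-; apply/colours_atP; exists F; rewrite -za.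
move=> E F hE hF' EF EFm; rewrite /recolour.
have [EF0|EF0] := eqVneq E F0; have [FF0|FF0] := eqVneq F F0.
- by rewrite EF0 FF0 eqxx in EF.
- rewrite eq_sym; apply: new; last by rewrite setIC -EF0.
  by move: hF'; rewrite !inE (negbTE FF0).
- by apply: new; [move: hE; rewrite !inE (negbTE EF0) | rewrite -FF0].
- by apply: hc => //; [move: hE | move: hF']; rewrite !inE ?(negbTE EF0) ?(negbTE FF0).
Qed.

Lemma proper_recolour c D F a b g : proper_on c D -> F \in D -> F = [set a; b] ->
  g \notin colours_at c D a -> g \notin colours_at c D b ->
  proper_on (recolour c F g) D.
Proof.
move=> hc FD hF ga gb; rewrite -(setD1K FD).
have DF : D :\ F \subset D by apply: subD1set.
apply: (proper_on_setU1 _ hF); first exact: proper_onS DF.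
- by apply: contra ga; apply/subsetP/colours_atS.
- by apply: contra gb; apply/subsetP/colours_atS.
Qed.

Lemma colours_at_recolour c D F g w : w \notin F ->
  colours_at (recolour c F g) D w = colours_at c D w.
Proof.
move=> wF; apply: eq_in_imset => F'; rewrite inE /recolour => /andP [_ wF'].
by case: eqVneq => // F'F; rewrite -F'F wF' in wF.
Qed.

Lemma recolour_frees c D F g w : proper_on c D -> F \in D -> w \in F -> c F != g ->
  c F \notin colours_at (recolour c F g) D w.
Proof.
move=> hc FD wF cFg; apply/colours_atP => -[F' [F'D wF']]; rewrite /recolour.
case: eqVneq => [_|F'F]; first by apply/eqP; rewrite eq_sym.
by apply/eqP; apply: hc => //; apply/set0Pn; exists w; rewrite inE wF' wF.
Qed.

Definition kempe_rel c D a b : rel T :=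
  fun x y => ([set x; y] \in D) && (c [set x; y] \in [set a; b]).

Definition kempe_chain c D a b v : {set T} := [set w | connect (kempe_rel c D a b) v w].

Definition kempe_swap c D a b v : {set T} -> 'I_k :=
  fun F => if [exists w in kempe_chain c D a b v, w \in F] then tperm a b (c F) else c F.

Section Kempe.
Variable r : rel T.
Hypothesis r_simple : simple_graph r.
Variables (c : {set T} -> 'I_k) (D : {set {set T}}) (a b : 'I_k) (v : T).
Hypothesis D_edges : D \subset edge_set r.
Local Notation K := (kempe_rel c D a b).
Local Notation chain := (kempe_chain c D a b v).

Lemma kempe_swap_at F w : F \in D -> w \in F ->
  kempe_swap c D a b v F = if w \in chain then tperm a b (c F) else c F.
Proof.
move=> FD wF; rewrite /kempe_swap.
have [cF|] := boolP (c F \in [set a; b]); last first.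
  by rewrite !inE negb_or => /andP [ca cb]; rewrite tpermD 1?eq_sym // !if_same.
have [z hF _] := edge_set_at (proj1 r_simple) (subsetP D_edges F FD) wF; subst F.
congr (if _ then _ else _); apply/exists_inP/idP => [[u]|wc]; last by exists w.
rewrite !inE => vu /orP [] /eqP uwz; first by rewrite -uwz.
apply: (connect_trans vu); rewrite uwz; apply: connect1.
by rewrite /kempe_rel setUC FD cF.
Qed.

Lemma kempe_swap_proper : proper_on c D -> proper_on (kempe_swap c D a b v) D.
Proof.
move=> hc E F ED FD EF EFm; case/set0Pn: (EFm) => z; rewrite inE => /andP [zE zF].
rewrite (kempe_swap_at ED zE) (kempe_swap_at FD zF).
by case: ifP => _; rewrite ?(inj_eq perm_inj); apply: hc.
Qed.

Lemma colours_at_kempe_swap w : colours_at (kempe_swap c D a b v) D w =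
  if w \in chain then tperm a b @: colours_at c D w else colours_at c D w.
Proof.
rewrite /colours_at; case: ifP => wc; rewrite -?imset_comp; apply: eq_in_imset => F.
all: by rewrite inE => /andP [FD wF]; rewrite /= (kempe_swap_at FD wF) wc.
Qed.

Lemma kempe_rel_uniq x y y' : proper_on c D -> K x y -> K x y' ->
  c [set x; y] = c [set x; y'] -> y = y'.
Proof.
move=> hc /andP [xyD _] /andP [xy'D _] /eqP; apply: contraTeq => yy'.
have rxy : r x y by rewrite -(mem_edge_set2 r_simple) (subsetP D_edges).
exact: (proper_on_adjacent r_simple hc).
Qed.

Lemma kempe_rel_deg1 x y y' : proper_on c D ->
  (a \notin colours_at c D x) || (b \notin colours_at c D x) ->
  K x y -> K x y' -> y = y'.
Proof.
move=> hc hx hy hy'; apply: (kempe_rel_uniq hc hy hy').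
have col z : K x z -> c [set x; z] \in colours_at c D x.
  by case/andP => xzD _; apply: mem_colours_at; rewrite // !inE eqxx.
move: (col _ hy) (col _ hy') hx; case/andP: hy => _; case/andP: hy' => _.
by rewrite !inE => /orP [] /eqP -> /orP [] /eqP -> // -> ->.
Qed.

Lemma kempe_rel_deg2 x y1 y2 y3 : proper_on c D -> K x y1 -> K x y2 -> K x y3 ->
  [|| y1 == y2, y1 == y3 | y2 == y3].
Proof.
move=> hc k1 k2 k3.
have u12 := kempe_rel_uniq hc k1 k2; have u13 := kempe_rel_uniq hc k1 k3.
have u23 := kempe_rel_uniq hc k2 k3.
case/andP: k1 k2 k3 => _ + /andP [_ +] /andP [_ +].
rewrite !inE => /orP [] /eqP e1 /orP [] /eqP e2 /orP [] /eqP e3.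
all: first [ by rewrite u12 ?eqxx // e1 e2 | by rewrite u13 ?eqxx ?orbT // e1 e3
           | by rewrite u23 ?eqxx ?orbT // e2 e3 ].
Qed.

End Kempe.
End PartialEdgeColouring.

Lemma mem_tperm_imset (T : finType) (a b g : T) (U : {set T}) :
  (g \in tperm a b @: U) = (tperm a b g \in U).
Proof. by rewrite -{1}(tpermK a b g) mem_imset //; apply: perm_inj. Qed.

Section MaxDegreeTwo.
Variable T : finType.

Definition del_vertex (K : rel T) x : rel T := fun a b => [&& K a b, a != x & b != x].

Lemma connect_del_leaf (K : rel T) x x' w : (forall b, K x b -> b = x') ->
  w != x -> connect K x w -> connect (del_vertex K x) x' w.
Proof.
move=> leaf wx /connectP [p pth wl]; subst w.
case: (shortenP pth) wx => [[|b q] /= + + _]; first by rewrite eqxx.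
case/andP => /leaf -> {b} qth; rewrite inE negb_or => /andP [/andP [xx' xq] _] wx.
apply/connectP; exists q => //; apply: (sub_in_path (P := predC1 x) (e := K) _ _ qth).
  by move=> u u'; rewrite !inE /del_vertex => ux u'x ->; rewrite ux u'x.
apply/allP => u; rewrite inE => /orP [/eqP ->|uq] /=; first by rewrite eq_sym.
by apply: contraNneq xq => <-.
Qed.

(* In a graph of maximum degree two every component is a path or a cycle, so
   it contains at most two vertices of degree at most one. *)
Lemma max_deg2_two_ends (K : rel T) : symmetric K ->
  (forall a b1 b2 b3, K a b1 -> K a b2 -> K a b3 -> [|| b1 == b2, b1 == b3 | b2 == b3]) ->
  forall x y z, x != y -> x != z -> y != z ->
  (forall b b', K x b -> K x b' -> b = b') ->
  (forall b b', K y b -> K y b' -> b = b') ->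
  (forall b b', K z b -> K z b' -> b = b') ->
  connect K x y -> connect K x z -> False.
Proof.
have nbr (R : rel T) a b : a != b -> connect R a b -> exists a', R a a'.
  move=> ab /connectP [[|c p] /= pth hl]; first by rewrite -hl eqxx in ab.
  by case/andP: pth => ac _; exists c.
move: {2}#|_| (leqnn #|[set a | [exists b, K a b]]|) => n.
elim: n K => [|n IH] K hn K_sym K_deg x y z xy xz yz dx dy dz cxy cxz.
  have [x' xx'] := nbr K x y xy cxy.
  have : x \in [set a | [exists b, K a b]] by rewrite inE; apply/existsP; exists x'.
  by move: hn; rewrite leqn0 => /eqP /cards0_eq ->; rewrite inE.
have [x' xx'] := nbr K x y xy cxy.
pose K' := del_vertex K x.
have leaf b : K x b -> b = x' by move=> xb; apply: dx.
have cx'y : connect K' x' y by apply: connect_del_leaf; rewrite // eq_sym.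
have cx'z : connect K' x' z by apply: connect_del_leaf; rewrite // eq_sym.
have isolated w : (forall b b', K w b -> K w b' -> b = b') -> K x w -> forall b, ~~ K' w b.
  move=> dw xw b; apply/and3P => -[wb _]; rewrite K_sym in xw.
  by rewrite (dw _ _ wb xw) eqxx.
have [x'y|x'y] := eqVneq x' y.
  by subst x'; have [b] := nbr K' y z yz cx'z; apply/negP/isolated.
have [x'z|x'z] := eqVneq x' z.
  by subst x'; rewrite eq_sym in yz; have [b] := nbr K' z y yz cx'y; apply/negP/isolated.
apply: (IH K' _ _ _ x' y z x'y x'z yz) => //.
- rewrite -ltnS; apply: leq_trans hn; apply: proper_card; apply/properP; split.
    by apply/subsetP => u; rewrite !inE => /existsP [b /and3P [ub _ _]]; apply/existsP; exists b.
  exists x; first by rewrite inE; apply/existsP; exists x'.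
  by rewrite inE; apply/existsP => -[b /and3P [_]]; rewrite eqxx.
- by move=> a b; rewrite /K' /del_vertex K_sym; congr (_ && _); apply: andbC.
- move=> a b1 b2 b3 /and3P [k1 _ _] /and3P [k2 _ _] /and3P [k3 _ _].
  exact: K_deg k1 k2 k3.
- move=> b b' /and3P [x'b _ bx] /and3P [x'b' _ b'x].
  rewrite K_sym in xx'; have := K_deg _ _ _ _ xx' x'b x'b'.
  by rewrite eq_sym (negbTE bx) eq_sym (negbTE b'x) => /eqP.
- by move=> b b' /and3P [h _ _] /and3P [h' _ _]; apply: dy.
- by move=> b b' /and3P [h _ _] /and3P [h' _ _]; apply: dz.
Qed.
End MaxDegreeTwo.

Section SubcubicEdgeColouring.
Variables (V : finType) (e : rel V).
Hypotheses (e_simple : simple_graph e) (e_deg3 : forall v, #|[set u | e v u]| <= 3).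
Implicit Types (c : {set V} -> 'I_4) (D : {set {set V}}) (F : {set V}) (g : 'I_4).

Lemma card_edges_at w : #|[set F in edge_set e | w \in F]| <= 3.
Proof.
apply: leq_trans (e_deg3 w); apply: leq_trans (leq_imset_card (fun u => [set w; u]) _).
apply/subset_leq_card/subsetP => F; rewrite inE => /andP [FE wF].
have [t -> ewt] := edge_set_at (proj1 e_simple) FE wF.
by apply/imsetP; exists t; rewrite ?inE.
Qed.

Lemma card_colours_at c D w : D \subset edge_set e -> #|colours_at c D w| <= 3.
Proof.
move=> /subsetP De; apply: leq_trans (leq_imset_card _ _) (leq_trans _ (card_edges_at w)).
apply/subset_leq_card/subsetP => F; rewrite inE => /andP [FD wF].
by rewrite inE De.
Qed.

Lemma card_colours_at_uncoloured c D E0 w : D \subset edge_set e ->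
  E0 \in edge_set e -> E0 \notin D -> w \in E0 -> #|colours_at c D w| <= 2.
Proof.
move=> /subsetP De E0e E0D wE0; apply: leq_trans (leq_imset_card _ _) _.
have : #|[set F in edge_set e | w \in F] :\ E0| <= 2.
  by have := card_edges_at w; rewrite (cardsD1 E0) inE E0e wE0.
apply: leq_trans; apply/subset_leq_card/subsetP => F; rewrite inE => /andP [FD wF].
by rewrite in_setD1 in_set De // wF !andbT; apply: contraNneq E0D => <-.
Qed.

Lemma exists_missing_colour (U : {set 'I_4}) : #|U| < 4 -> exists g, g \notin U.
Proof.
move=> hU; have : 0 < #|~: U| by have := cardsC U; rewrite card_ord; lia.
by case/card_gt0P => g; rewrite inE; exists g.
Qed.

Lemma disjoint_colours (A B : {set 'I_4}) : #|A| <= 2 -> #|B| <= 2 ->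
  (forall g, (g \in A) || (g \in B)) -> forall g, g \in A -> g \notin B.
Proof.
move=> hA hB AB g gA; apply/negP => gB.
have AUB : A :|: B = setT by apply/setP => h; rewrite !inE AB.
have : 0 < #|A :&: B| by apply/card_gt0P; exists g; rewrite inE gA gB.
by have := cardsUI A B; rewrite AUB cardsT card_ord; lia.
Qed.

Section ExtendColouring.
Variables (D : {set {set V}}) (x y : V).
Hypotheses (D_edges : D \subset edge_set e) (exy : e x y) (xyD : [set x; y] \notin D).
Local Notation extendable := (exists c' : {set V} -> 'I_4, proper_on c' ([set x; y] |: D)).

Lemma edge_at_x F z : F \in D -> F = [set x; z] -> e x z /\ y \notin F.
Proof.
move=> FD hF; subst F; split; first by rewrite -(mem_edge_set2 e_simple) (subsetP D_edges).
rewrite !inE negb_or; apply/andP; split.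
  by apply: contraTneq exy => ->; rewrite (proj2 e_simple).
by apply: contraNneq xyD => ->.
Qed.

Lemma extend_common c g : proper_on c D ->
  g \notin colours_at c D x -> g \notin colours_at c D y -> extendable.
Proof. by move=> hc gx gy; exists (recolour c [set x; y] g); apply: proper_on_setU1. Qed.

Lemma extend_shift c F z g : proper_on c D -> F \in D -> F = [set x; z] ->
  c F \notin colours_at c D y ->
  g \notin colours_at c D x -> g \notin colours_at c D z -> extendable.
Proof.
move=> hc FD hF Fy gx gz; have [_ yF] := edge_at_x FD hF.
have gF : c F != g.
  by apply: contraNneq gx => <-; apply: mem_colours_at; rewrite // hF !inE eqxx.
apply: (extend_common (c := recolour c F g) (g := c F)).
- exact: proper_recolour hc FD hF gx gz.
- by apply: recolour_frees; rewrite // hF !inE eqxx.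
- by rewrite colours_at_recolour.
Qed.

Lemma extend_kempe c F z al be : proper_on c D -> F \in D -> F = [set x; z] ->
  c F \notin colours_at c D y -> c F != al -> c F != be ->
  al \notin colours_at c D x -> be \notin colours_at c D y -> be \notin colours_at c D z ->
  extendable.
Proof.
move=> hc FD hF Fy Fal Fbe al_x be_y be_z; have [exz yF] := edge_at_x FD hF.
have e_irr := proj2 e_simple.
have xy : x != y by apply: contraTneq exy => ->; rewrite e_irr.
have xz : x != z by apply: contraTneq exz => ->; rewrite e_irr.
have yz : y != z by apply: contraNneq yF => ->; rewrite hF !inE eqxx orbT.
pose c1 := kempe_swap c D al be x.
have hc1 : proper_on c1 D := kempe_swap_proper e_simple al be x D_edges hc.
have C1 := colours_at_kempe_swap e_simple c al be x D_edges.
have xc : x \in kempe_chain c D al be x by rewrite inE connect0.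
have be_x1 : be \notin colours_at c1 D x.
  by rewrite C1 xc mem_tperm_imset tpermR.
have [yc|yc] := boolP (y \in kempe_chain c D al be x); last first.
  by apply: (extend_common hc1 be_x1); rewrite C1 (negbTE yc).
(* x misses al, y and z miss be: all three are ends of (al, be)-chains. *)
have zc : z \notin kempe_chain c D al be x.
  rewrite !inE in yc *; apply/negP => zc.
  apply: (max_deg2_two_ends _ _ xy xz yz _ _ _ yc zc).
  - by move=> a b; rewrite /kempe_rel setUC.
  - by move=> ? ? ? ?; apply: (kempe_rel_deg2 e_simple D_edges hc).
  - by move=> ? ?; apply: (kempe_rel_deg1 e_simple D_edges hc); rewrite al_x.
  - by move=> ? ?; apply: (kempe_rel_deg1 e_simple D_edges hc); rewrite be_y orbT.
  - by move=> ? ?; apply: (kempe_rel_deg1 e_simple D_edges hc); rewrite be_z orbT.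
have xF : x \in F by rewrite hF !inE eqxx.
have cF1 : c1 F = c F.
  by rewrite /c1 (kempe_swap_at e_simple c al be x D_edges FD xF) xc tpermD 1?eq_sym.
apply: (extend_shift hc1 FD hF (g := be)) => //.
- by rewrite cF1 C1 yc mem_tperm_imset tpermD 1?eq_sym.
- by rewrite C1 (negbTE zc).
Qed.

Lemma extend_colouring c : proper_on c D -> extendable.
Proof.
move=> hc; have [g /andP [gx gy]|nocommon] :=
  pickP (fun g => (g \notin colours_at c D x) && (g \notin colours_at c D y)).
  exact: extend_common gx gy.
have xy_e : [set x; y] \in edge_set e by rewrite (mem_edge_set2 e_simple).
have Cx2 : #|colours_at c D x| <= 2.
  by apply: (card_colours_at_uncoloured _ D_edges xy_e); rewrite // !inE eqxx.
have Cy2 : #|colours_at c D y| <= 2.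
  by apply: (card_colours_at_uncoloured _ D_edges xy_e); rewrite // !inE eqxx orbT.
have cover g : (g \in colours_at c D x) || (g \in colours_at c D y).
  by apply/negPn; rewrite negb_or nocommon.
have [be be_y] := exists_missing_colour (leq_ltn_trans Cy2 (isT : 2 < 4)).
have /colours_atP [F [FD xF cF]] : be \in colours_at c D x.
  by move: (cover be); rewrite (negbTE be_y) orbF.
have [z hF _] := edge_set_at (proj1 e_simple) (subsetP D_edges F FD) xF.
have Fy : c F \notin colours_at c D y by rewrite cF.
have Cz3 := card_colours_at c z D_edges.
have [be' be'_z] := exists_missing_colour (leq_ltn_trans Cz3 (isT : 3 < 4)).
have [be'_x|be'_x] := boolP (be' \in colours_at c D x).
  2: exact: extend_shift FD hF Fy be'_x be'_z.
have [al al_x] := exists_missing_colour (leq_ltn_trans Cx2 (isT : 2 < 4)).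
apply: (extend_kempe (al := al) (be := be') hc FD hF Fy) => //.
- by apply: contraNneq al_x => <-; apply: mem_colours_at.
- by apply: contraNneq be'_z => <-; apply: mem_colours_at; rewrite // hF !inE eqxx orbT.
- exact: disjoint_colours Cx2 Cy2 cover _ be'_x.
Qed.

End ExtendColouring.

Lemma subcubic_edge_colouring : exists c : {set V} -> 'I_4, proper_edge_colouring e c.
Proof.
suff ext D : D \subset edge_set e -> exists c : {set V} -> 'I_4, proper_on c D.
  by have [c hc] := ext _ (subxx _); exists c.
move: {2}#|D| (leqnn #|D|) => n; elim: n D => [|n IH] D hn De.
  by exists (fun _ => ord0) => E F; move: hn; rewrite leqn0 => /eqP /cards0_eq ->; rewrite inE.
have [->|[E0 E0D]] := set_0Vmem D; first by exists (fun _ => ord0) => E F; rewrite inE.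
have De' : D :\ E0 \subset edge_set e by apply: subset_trans De; apply: subD1set.
have [c hc] : exists c : {set V} -> 'I_4, proper_on c (D :\ E0).
  by apply: IH De'; move: hn; rewrite (cardsD1 E0 D) E0D add1n.
move: (subsetP De _ E0D); rewrite -(setD1K E0D) inE.
case/existsP => x /existsP [y /andP [/eqP hE0 exy]]; subst E0.
have xyD : [set x; y] \notin D :\ [set x; y] by rewrite !inE eqxx.
exact: extend_colouring De' exy xyD _ hc.
Qed.

End SubcubicEdgeColouring.
Section TriangleReplacement.
Variables (V : finType) (e : rel V).
Hypothesis e_cubic : cubic e.

Let e_sym : symmetric e. Proof. by case: e_cubic => [[]]. Qed.
Let e_irr : irreflexive e. Proof. by case: e_cubic => [[]]. Qed.

Lemma cubic_avoid2 v a b : exists w, [/\ e v w, w != a & w != b].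
Proof.
have : 0 < #|[set u | e v u] :\ a :\ b|.
  have := cardsD1 a [set u | e v u]; have := cardsD1 b ([set u | e v u] :\ a).
  by case: e_cubic => _ /(_ v); lia.
by case/card_gt0P => w; rewrite !inE => /and3P [wb wa evw]; exists w.
Qed.

Lemma cubic_nbr3 v a b c d : e v a -> e v b -> e v c -> e v d ->
  a != b -> a != c -> b != c -> [|| d == a, d == b | d == c].
Proof.
move=> ha hb hc hd ab ac bc; apply/negPn/negP => /norP [da /norP [db dc]].
have : #|d |: (c |: [set a; b])| <= #|[set u | e v u]|.
  by apply/subset_leq_card/subsetP => x; rewrite !inE => /or4P [] /eqP ->.
case: e_cubic => _ ->; rewrite !cardsU1 !inE cards1 (negbTE da) (negbTE db).
by rewrite (negbTE dc) eq_sym (negbTE ac) eq_sym (negbTE bc) ab.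
Qed.

Local Notation G := (tri_rel e).

Definition dart a b (h : e a b) : tri_vert e := exist _ (a, b) h.

Lemma dart_eqE (x y : tri_vert e) :
  (x == y) = ((val x).1 == (val y).1) && ((val x).2 == (val y).2).
Proof. by case: x y => [[a b] ?] [[c d] ?]; rewrite -val_eqE. Qed.

Lemma dart_neq (x : tri_vert e) : (val x).1 != (val x).2.
Proof. by apply: contraTneq (valP x) => /= ->; rewrite e_irr. Qed.

Lemma tri_rel_triangle (x y : tri_vert e) :
  (val x).1 = (val y).1 -> (val x).2 != (val y).2 -> G x y.
Proof. by move=> h1 h2; rewrite /tri_rel h1 eqxx h2. Qed.

Lemma tri_rel_pendant (x y : tri_vert e) :
  val y = ((val x).2, (val x).1) -> G x y.
Proof. by move=> hy; rewrite /tri_rel hy /= !eqxx orbT. Qed.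

Lemma tri_relP (x y : tri_vert e) : G x y ->
  val y = ((val x).2, (val x).1) \/ (val x).1 = (val y).1 /\ (val x).2 != (val y).2.
Proof.
case/orP => [/andP [/eqP h1 h2]|/andP [/eqP h1 /eqP h2]]; last first.
  by left; rewrite [val y]surjective_pairing h1 h2.
by right; split => //; rewrite dart_eqE h1 eqxx.
Qed.

Lemma tri_simple : simple_graph G.
Proof.
split=> [[[a b] ?] [[c d] ?]|x]; rewrite /tri_rel /=.
  by congr (_ || _); rewrite 1?[(c == b) && _]andbC (eq_sym a) (eq_sym b).
by rewrite !eqxx /= (negbTE (dart_neq x)).
Qed.

Lemma card_tri_vert : #|{: tri_vert e}| = 3 * #|V|.
Proof.
rewrite card_sig -sum1_card.
rewrite -(pair_big_dep xpredT (fun v u => e v u) (fun _ _ => 1)) /=.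
rewrite (eq_bigr (fun _ => 3)) ?sum_nat_const ?card_ord ?cardT ?size_enum_ord //.
  by rewrite mulnC.
by move=> v _; rewrite sum1_card; case: e_cubic => _ /(_ v) <-; rewrite cardsE.
Qed.

Lemma conv_iter_unseeded (S : {set tri_vert e}) v :
  (forall x, x \in S -> (val x).1 != v) ->
  forall t x, (val x).1 = v -> x \notin iter t (conv_step G) S.
Proof.
move=> hS; elim=> [|t IH] x xv /=; first by apply/negP => /hS; rewrite xv eqxx.
have outside y : y \in iter t (conv_step G) S -> (val x).1 != (val y).1.
  by apply: contraTneq => yv; apply: IH; rewrite -yv.
rewrite /conv_step !inE negb_or IH //= -ltnNge ltnS.
apply/card_le1_eqP => y z; rewrite !inE => /andP [/outside xy Gxy] /andP [/outside xz Gxz].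
case: (tri_relP Gxy) => [hy|[/eqP]]; last by rewrite (negbTE xy).
case: (tri_relP Gxz) => [hz|[/eqP]]; last by rewrite (negbTE xz).
by apply: val_inj; rewrite hy hz.
Qed.

Lemma c2_tri_ge : #|V| <= c2 G.
Proof.
rewrite /c2; case: ex_minnP => k /asboolP [S [<- [t ht]]] _.
have seeded v : [exists x in S, (val x).1 == v].
  apply: contraT; rewrite negb_exists_in => /forall_inP hS.
  have [w [evw _ _]] := cubic_avoid2 v v v.
  by have := conv_iter_unseeded hS t (x := dart evw) erefl; rewrite ht inE.
rewrite -cardsT; have -> : [set: V] = [set (val x).1 | x in S].
  apply/setP => v; rewrite inE; apply/esym/imsetP.
  by case/exists_inP: (seeded v) => x xS /eqP <-; exists x.
exact: leq_imset_card.
Qed.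

Definition lift_edge (E : {set V}) : {set tri_vert e} :=
  [set x | [set (val x).1; (val x).2] == E].

Lemma lift_edge_pendant (x y : tri_vert e) : val y = ((val x).2, (val x).1) ->
  lift_edge [set (val x).1; (val x).2] = [set x; y].
Proof.
move=> hy; apply/setP => z; rewrite !inE; apply/eqP/orP => [/eq_set2 []|].
- by case=> h1 h2; left; rewrite dart_eqE h1 h2 !eqxx.
- by case=> h1 h2; right; rewrite dart_eqE hy h1 h2 !eqxx.
- by case=> /eqP ->; rewrite // hy /= setUC.
Qed.

Lemma connect_same_vertex (EG : {set tri_vert e}) (x y : tri_vert e) :
  (val x).1 = (val y).1 -> connect (del_edge G EG) x y.
Proof.
move=> xy1; have [->|xy] := eqVneq x y; first exact: connect0.
have xy2 : (val x).2 != (val y).2 by apply: contraNneq xy => xy2; rewrite dart_eqE xy1 xy2 !eqxx.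
have Gxy := tri_rel_triangle xy1 xy2.
have [EGxy|EGxy] := eqVneq [set x; y] EG; last by apply: connect1; rewrite /del_edge Gxy.
have [w [ew wx wy]] := cubic_avoid2 (val x).1 (val x).2 (val y).2.
pose z := dart ew.
have zx : z != x by rewrite dart_eqE /= (negbTE wx) andbF.
have zy : z != y by rewrite dart_eqE /= (negbTE wy) andbF.
have zEG : z \notin EG by rewrite -EGxy !inE negb_or zx.
apply: (connect_trans (y := z)); apply: connect1; apply/andP; split.
- by apply: tri_rel_triangle; rewrite //= eq_sym.
- by apply: contraNneq zEG => <-; rewrite !inE eqxx orbT.
- by apply: tri_rel_triangle; rewrite //= -xy1.
- by apply: contraNneq zEG => <-; rewrite !inE eqxx.
Qed.

Lemma connect_lift_edge E (x y : tri_vert e) :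
  connect (del_edge G (lift_edge E)) x y = connect (del_edge e E) (val x).1 (val y).1.
Proof.
apply/idP/idP.
  apply: (homo_connect (h := fun x : tri_vert e => (val x).1)) => a b /andP [Gab hab].
  case: (tri_relP Gab) => [hb|[-> _]]; last exact: connect0.
  apply: connect1; rewrite /del_edge hb (valP a) /=.
  by apply: contraNneq hab => <-; rewrite (lift_edge_pendant hb).
move=> /connectP [p]; elim: p x => [|u p IH] x /=.
  by move=> _ hlast; apply: connect_same_vertex.
case/andP => /andP [eu hu] pth hlast.
have eu' : e u (val x).1 by rewrite e_sym.
pose d := dart eu; pose d' := dart eu'.
apply: (connect_trans (y := d)); first exact: connect_same_vertex.
apply: (connect_trans (y := d')); last exact: IH.
apply: connect1; rewrite /del_edge tri_rel_pendant //=.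
apply: contraNneq hu => hdd'.
have : d \in lift_edge E by rewrite -hdd' !inE eqxx.
by rewrite inE.
Qed.

Lemma bridge_lift_edge E : is_bridge e E -> is_bridge G (lift_edge E).
Proof.
case/existsP => u /existsP [v /and3P [/eqP -> euv huv]].
have evu : e v u by rewrite e_sym.
apply/existsP; exists (dart euv); apply/existsP; exists (dart evu).
rewrite (lift_edge_pendant (x := dart euv) (y := dart evu)) //= eqxx tri_rel_pendant //=.
by rewrite -(lift_edge_pendant (x := dart euv) (y := dart evu)) // connect_lift_edge.
Qed.

Lemma bridge_tri_rel EG : is_bridge G EG -> exists2 E, is_bridge e E & EG = lift_edge E.
Proof.
case/existsP => x /existsP [y /and3P [/eqP EGxy Gxy hxy]].
case: (tri_relP Gxy) => [hy|[xy1 _]]; last first.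
  by move: hxy; rewrite (connect_same_vertex _ xy1).
have hEG : EG = lift_edge [set (val x).1; (val x).2] by rewrite EGxy (lift_edge_pendant hy).
exists [set (val x).1; (val x).2] => //.
apply/existsP; exists (val x).1; apply/existsP; exists (val x).2.
by rewrite eqxx (valP x); move: hxy; rewrite hEG connect_lift_edge hy.
Qed.

Lemma num_bridges_tri : num_bridges G = num_bridges e.
Proof.
rewrite /num_bridges.
have -> : [set EG in edge_set G | is_bridge G EG] =
          lift_edge @: [set E in edge_set e | is_bridge e E].
  apply/setP => EG; rewrite inE; apply/andP/imsetP.
    by case=> _ /bridge_tri_rel [E hb ->]; exists E => //; rewrite inE hb bridge_edge.
  case=> E; rewrite inE => /andP [_ hb] ->.
  by have hb' := bridge_lift_edge hb; rewrite hb' bridge_edge.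
apply: card_in_imset => E E'; rewrite !inE => /andP [hE _] _.
case/existsP: hE => u /existsP [v /andP [/eqP -> euv]] hEE'.
have : dart euv \in lift_edge E' by rewrite -hEE' inE.
by rewrite inE /= => /eqP.
Qed.

(* The pendant edge {(v,u), (u,v)} projects to the edge vu of H; the triangle
   edge {(v,b), (v,d)} projects to vw, w being the third neighbour of v, i.e. to
   the edge of H at the opposite dart (v,w) of T(v). *)
Definition proj_edge (EG : {set tri_vert e}) : {set V} :=
  let ends := [set (val x).1 | x in EG] in
  if #|ends| == 2 then ends
  else ends :|: [set w | [exists x in EG, e (val x).1 w] && [forall x in EG, (val x).2 != w]].

Lemma proj_edge_pendant (x y : tri_vert e) : val y = ((val x).2, (val x).1) ->
  proj_edge [set x; y] = [set (val x).1; (val x).2].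
Proof.
move=> hy; rewrite /proj_edge imsetU1 imset_set1 hy /=.
by rewrite cards2 dart_neq.
Qed.

Lemma proj_edge_triangle (x y : tri_vert e) :
  (val x).1 = (val y).1 -> (val x).2 != (val y).2 ->
  exists2 w, proj_edge [set x; y] = [set (val x).1; w] &
             [/\ e (val x).1 w, w != (val x).2 & w != (val y).2].
Proof.
move=> xy1 xy2; have [w [ew wx wy]] := cubic_avoid2 (val x).1 (val x).2 (val y).2.
exists w => //; rewrite /proj_edge imsetU1 imset_set1 -xy1 setUid cards1 /=.
congr (_ :|: _); apply/setP => z; rewrite !inE exists_in_set2 forall_in_set2 -xy1 orbb.
apply/idP/idP => [/and3P [ez xz yz]|/eqP ->]; last by rewrite ew eq_sym wx eq_sym wy.
have ey : e (val x).1 (val y).2 by rewrite xy1 (valP y).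
have := cubic_nbr3 (valP x) ey ew ez xy2; rewrite eq_sym wx eq_sym wy => /(_ isT isT).
by rewrite eq_sym (negbTE xz) eq_sym (negbTE yz).
Qed.

Lemma proj_edge_adjacent (x y y' : tri_vert e) : G x y -> G x y' -> y != y' ->
  exists w w', [/\ proj_edge [set x; y] = [set (val x).1; w],
    proj_edge [set x; y'] = [set (val x).1; w'], e (val x).1 w, e (val x).1 w' & w != w'].
Proof.
wlog xy1 : y y' / (val x).1 = (val y).1 => [hwlog Gxy Gxy' yy'|].
  case: (tri_relP Gxy) => [hy|[xy1 _]]; last exact: hwlog.
  case: (tri_relP Gxy') => [hy'|[xy1' _]].
    by move: yy'; rewrite dart_eqE hy hy' !eqxx.
  have := hwlog y' y xy1' Gxy' Gxy; rewrite eq_sym => /(_ yy') [w' [w [? ? ? ? ?]]].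
  by exists w, w'; split; rewrite // eq_sym.
move=> Gxy Gxy' yy'; have xy2 : (val x).2 != (val y).2.
  by case: (tri_relP Gxy) => [hy|[] //]; move: (dart_neq x); rewrite xy1 hy /= eqxx.
have [w hw [ew wx wy]] := proj_edge_triangle xy1 xy2.
case: (tri_relP Gxy') => [hy'|[xy1' xy2']].
  by exists w, (val x).2; rewrite hw (proj_edge_pendant hy') (valP x).
have [w' hw' [ew' w'x w'y']] := proj_edge_triangle xy1' xy2'.
exists w, w'; split=> //; apply: contraNneq yy' => ww'.
rewrite dart_eqE -xy1 -xy1' eqxx /=; apply: contraT => yy2.
have ey : e (val x).1 (val y).2 by rewrite xy1 (valP y).
have ey' : e (val x).1 (val y').2 by rewrite xy1' (valP y').
have := cubic_nbr3 ey ey' (valP x) ew yy2; rewrite eq_sym xy2 eq_sym xy2' => /(_ isT isT).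
by rewrite (negbTE wy) ww' (negbTE w'y') (negbTE w'x).
Qed.

Lemma proper_proj_colouring k (c : {set V} -> 'I_k) :
  proper_edge_colouring e c -> proper_edge_colouring G (fun EG => c (proj_edge EG)).
Proof.
move=> hc EG FG hEG hFG EF /set0Pn [x]; rewrite inE => /andP [xE xF].
have [y EGxy Gxy] := edge_set_at (proj1 tri_simple) hEG xE.
have [y' FGxy' Gxy'] := edge_set_at (proj1 tri_simple) hFG xF.
subst EG FG; have yy' : y != y' by apply: contraNneq EF => ->.
have [w [w' [-> -> ew ew' ww']]] := proj_edge_adjacent Gxy Gxy' yy'.
exact: (proper_colour_adjacent (proj1 e_cubic) hc).
Qed.

Lemma proper_lift_colouring k (c : {set tri_vert e} -> 'I_k) : k <= 3 ->
  proper_edge_colouring G c -> proper_edge_colouring e (fun E => c (lift_edge E)).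
Proof.
move=> hk hc E F hE hF EF /set0Pn [v]; rewrite inE => /andP [vE vF].
have [u EGvu evu] := edge_set_at e_sym hE vE.
have [u' FGvu' evu'] := edge_set_at e_sym hF vF.
subst E F; have uu' : u != u' by apply: contraNneq EF => ->.
have [w [evw wu wu']] := cubic_avoid2 v u u'.
have euv : e u v by rewrite e_sym.
have eu'v : e u' v by rewrite e_sym.
have uv : u != v by apply: contraTneq euv => ->; rewrite e_irr.
have u'v : u' != v by apply: contraTneq eu'v => ->; rewrite e_irr.
pose x := dart evu; pose x' := dart evu'; pose x'' := dart evw.
pose y := dart euv; pose y' := dart eu'v.
rewrite -[[set v; u]]/[set (val x).1; (val x).2] (lift_edge_pendant (y := y)) //.
rewrite -[[set v; u']]/[set (val x').1; (val x').2] (lift_edge_pendant (y := y')) //.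
have neq1 (a b : tri_vert e) : (val a).1 != (val b).1 -> a != b.
  by move=> ab; rewrite dart_eqE (negbTE ab).
have neq2 (a b : tri_vert e) : (val a).2 != (val b).2 -> a != b.
  by move=> ab; rewrite dart_eqE (negbTE ab) andbF.
have [Gsym _] := tri_simple.
have [uw u'w] : u != w /\ u' != w by rewrite !(eq_sym _ w).
have Gxy : G x y by apply: tri_rel_pendant.
have Gx'y' : G x' y' by apply: tri_rel_pendant.
have Gxx' : G x x' by apply: tri_rel_triangle.
have Gxx'' : G x x'' by apply: tri_rel_triangle.
have Gx'x'' : G x' x'' by apply: tri_rel_triangle.
have opp := proper_colour3_opposite tri_simple hk hc.
have Gx'x : G x' x by rewrite Gsym.
rewrite (opp _ _ _ _ Gxy Gxx' Gxx'' Gx'x'' (neq1 y x' uv) (neq1 y x'' uv) (neq2 x' x'' u'w)).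
rewrite (opp _ _ _ _ Gx'y' Gx'x Gx'x'' Gxx'' (neq1 y' x u'v) (neq1 y' x'' u'v) (neq2 x x'' uw)).
rewrite [[set x'; x'']]setUC [[set x; x'']]setUC.
by apply: (proper_colour_adjacent tri_simple hc); rewrite 1?Gsym // neq2 // eq_sym.
Qed.

Lemma chromatic_index_tri : chromatic_index G = chromatic_index e.
Proof.
rewrite /chromatic_index; case: ex_minnP => kG /asboolP [cG hcG] minG.
case: ex_minnP => kH /asboolP [cH hcH] minH.
apply/eqP; rewrite eqn_leq; apply/andP; split.
  apply: minG; apply/asboolP; exists (fun EG => cH (proj_edge EG)).
  exact: proper_proj_colouring.
have [kG3|kG4] := leqP kG 3.
  apply: minH; apply/asboolP; exists (fun E => cG (lift_edge E)).
  exact: proper_lift_colouring.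
have e_deg3 v : #|[set u | e v u]| <= 3 by case: e_cubic => _ ->.
by apply: leq_trans kG4; apply: minH; apply/asboolP; apply: subcubic_edge_colouring e_deg3.
Qed.

End TriangleReplacement.

Local Open Scope ring_scope.

Theorem proposition5p11 (V : finType) (e : rel V) :
  cubic e ->
  let G := tri_rel e in
  let m := #|V| in
  (((c2 G)%:Z - ((#|{: tri_vert e}| + 2 + 3) %/ 4)%N%:Z) >= ((m%:Z - 2) %/ 4)%Z)
  /\ num_bridges G = num_bridges e
  /\ chromatic_index G = chromatic_index e.
Proof.
move=> e_cubic G m; split; last split.
- rewrite /G /m card_tri_vert //.
  by have := c2_tri_ge e_cubic; move: (c2 (tri_rel e)) #|V| => c b; lia.
- exact: num_bridges_tri.
- exact: chromatic_index_tri.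
Qed.
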